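(* Fix $L\in\mathbb R$. There are $c>0$ and $C\in\mathbb R$ such that for all $n$ large enough $$|Q^{(n)}_L(x,\xi)|\le Ce^{-c(x+\xi)}$$ for all $x\ge0$ and $\xi\in\mathbb R$.
   Context: $q_s^{(n)}(y)=\frac1{2\pi i}\oint_{\Gamma_0}\frac{dw}{w}w^y(1-w)^{n-s}(1+1/w)^s$, $\Gamma_0$ a small counterclockwise circle around $0$. $b_n(\tau)=n(1+1/\sqrt2)+2^{-1/6}\tau n^{2/3}$. Scaling (integer parts neglected): $i=2^{-5/6}xn^{1/3}$, $u=n/\sqrt2+2^{-5/6}\xi n^{1/3}$. $Q^{(n)}_L(x,\xi)=2^{-5/6}n^{1/3}2^{-n/2}(\sqrt2+1)^{i+2^{-5/6}\xi n^{1/3}-2^{-1/6}Ln^{2/3}}q^{(n)}_{b_n(L)/2}(u+i)$. *)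

From Stdlib Require Import Reals ZArith Lra.
Open Scope R_scope.

Fixpoint fallR (a : R) (k : nat) : R :=
  match k with
  | O => 1
  | S k' => fallR a k' * (a - INR k')
  end.

Definition gbin (a : R) (k : nat) : R := fallR a k / INR (fact k).

(* q_s^{(n)}(y) = (1/2πi) ∮_{Γ0} dw/w w^y (1-w)^{n-s} (1+1/w)^s
   = Res_{w=0} w^{y-s-1} (1-w)^{n-s} (1+w)^s
   = [w^{s-y}] (1-w)^{n-s} (1+w)^s   (0 if s - y < 0),
   where the binomial series are expanded at 0 (valid for all integer exponents). *)
Definition q_coef (n : nat) (s y : Z) : R :=
  let m := (s - y)%Z in
  if (m <? 0)%Z then 0
  else sum_f_R0 (fun k => gbin (INR n - IZR s) k * (-1) ^ k
                          * gbin (IZR s) (Z.to_nat m - k)) (Z.to_nat m).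

Definition floorZ (r : R) : Z := (up r - 1)%Z.

Definition cube_root_n (n : nat) : R := Rpower (INR n) (1/3).

Definition b_n (n : nat) (tau : R) : R :=
  INR n * (1 + 1 / sqrt 2) + Rpower 2 (-1/6) * tau * Rpower (INR n) (2/3).

Definition i_idx (n : nat) (x : R) : Z :=
  floorZ (Rpower 2 (-5/6) * x * cube_root_n n).

Definition u_idx (n : nat) (xi : R) : Z :=
  floorZ (INR n / sqrt 2 + Rpower 2 (-5/6) * xi * cube_root_n n).

Definition Q_n (n : nat) (L x xi : R) : R :=
  Rpower 2 (-5/6) * cube_root_n n * Rpower 2 (- INR n / 2)
  * Rpower (sqrt 2 + 1)
      (IZR (i_idx n x) + Rpower 2 (-5/6) * xi * cube_root_n n
       - Rpower 2 (-1/6) * L * Rpower (INR n) (2/3))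
  * q_coef n (floorZ (b_n n L / 2)) (u_idx n xi + i_idx n x).

(* [q_coef n s y] is the coefficient [c_M] of [w^M], [M = s - y], in the polynomial
   [P(w) = (1 - w)^(n - s) (1 + w)^s].  Averaging [P(r e^(it)) e^(-iMt)] over the
   [N]-th roots of unity recovers [c_M r^M] exactly, and on the circle
   [|P(r e^(it))| <= P_r exp (- K (1 - cos t))], where [P_r = (1 - r)^(n - s) (1 + r)^s]
   and [K] is the curvature of [- ln |P|] at [t = 0]; summing this Gaussian-like factor
   gives [|c_M| r^M <= P_r * 8 / sqrt K].  In the scaling of [Q_n] the phase has a double
   critical point at [r = sqrt 2 - 1 = e^(-lam)].  Moving inside, to
   [r = e^(-(lam + eps))] with [eps = 40 (|L| + 1) n^(-1/3)], makes [K] of order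
   [n^(2/3)], so that [8 / sqrt K] absorbs the prefactor [n^(1/3)], while [r^(-M)] turns
   the index shift [u + i] into the factor [e^(-eps (u + i))], i.e. [e^(-c (x + xi))].
   Third-order Taylor expansions of [ln (1 - r)] and [ln (1 + r)] bound what remains of
   the exponent by a constant. *)

From Stdlib Require Import Reals ZArith Lra Lia.
From Coquelicot Require Import Coquelicot.
Open Scope R_scope.

(** * Elementary inequalities *)

Lemma exp_le_exp (x y : R) : x <= y -> exp x <= exp y.
Proof. intros [H|H]; [left; apply exp_increasing, H|right; rewrite H; reflexivity]. Qed.

Lemma exp_pow (y : R) (n : nat) : exp y ^ n = exp (INR n * y).
Proof. rewrite <- Rpower_pow by apply exp_pos. unfold Rpower. rewrite ln_exp. reflexivity. Qed.

Lemma pow_1_add_le_exp (x : R) (n : nat) : -1 <= x -> (1 + x) ^ n <= exp (INR n * x).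
Proof.
  intros Hx. rewrite <- exp_pow. apply pow_incr.
  pose proof (exp_ineq1_le x). lra.
Qed.

Lemma exp_neg_le_inv (y : R) : 0 < y -> exp (- y) <= 1 / y.
Proof.
  intros Hy. rewrite exp_Ropp. pose proof (exp_ineq1_le y).
  unfold Rdiv. rewrite Rmult_1_l.
  apply Rinv_le_contravar; lra.
Qed.

Lemma le_of_is_derive_nonneg (h dh : R -> R) (a b : R) : a <= b ->
  (forall t, a <= t <= b -> is_derive h t (dh t)) ->
  (forall t, a <= t <= b -> 0 <= dh t) -> h a <= h b.
Proof.
  intros Hab Hd Hpos. destruct (Req_dec a b) as [<-|Hne]; [lra|].
  destruct (MVT_gen h a b dh) as [c [Hc Hmvt]].
  - intros t Ht. rewrite Rmin_left, Rmax_right in Ht by lra. apply Hd. lra.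
  - intros t Ht. rewrite Rmin_left, Rmax_right in Ht by lra.
    apply continuity_pt_filterlim, (ex_derive_continuous h t).
    exists (dh t). apply Hd. exact Ht.
  - rewrite Rmin_left, Rmax_right in Hc by lra.
    pose proof (Hpos c Hc). nra.
Qed.

Lemma exp_neg_le_taylor2 (e : R) : 0 <= e -> exp (- e) <= 1 - e + e ^ 2 / 2.
Proof.
  intros He.
  pose proof (le_of_is_derive_nonneg (fun t => 1 - t + t ^ 2 / 2 - exp (- t))
                (fun t => -1 + t + exp (- t)) 0 e He) as H.
  simpl in H. rewrite Ropp_0, exp_0 in H. simpl.
  enough (0 <= 1 - e + e * (e * 1) / 2 - exp (- e)) by lra.
  eapply Rle_trans; [|apply H]; [lra| |].
  - intros t _. auto_derive; [exact I|field].
  - intros t _. pose proof (exp_ineq1_le (- t)). lra.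
Qed.

Lemma exp_neg_ge_taylor3 (e : R) : 0 <= e -> 1 - e + e ^ 2 / 2 - e ^ 3 / 6 <= exp (- e).
Proof.
  intros He.
  pose proof (le_of_is_derive_nonneg (fun t => exp (- t) - 1 + t - t ^ 2 / 2 + t ^ 3 / 6)
                (fun t => - exp (- t) + 1 - t + t ^ 2 / 2) 0 e He) as H.
  simpl in H. rewrite Ropp_0, exp_0 in H. simpl.
  enough (0 <= exp (- e) - 1 + e - e * (e * 1) / 2 + e * (e * (e * 1)) / 6) by lra.
  eapply Rle_trans; [|apply H]; [lra| |].
  - intros t _. auto_derive; [exact I|field].
  - intros t Ht. pose proof (exp_neg_le_taylor2 t (proj1 Ht)). simpl in *. lra.
Qed.

Lemma exp_neg_taylor_bounds (eps : R) : 0 <= eps <= 0.4 ->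
  eps - eps ^ 2 / 2 <= 1 - exp (- eps) <= eps - eps ^ 2 / 2 + eps ^ 3 / 6
  /\ 0.8 * eps <= 1 - exp (- eps) <= eps.
Proof.
  intros Heps.
  pose proof (exp_neg_le_taylor2 eps (proj1 Heps)).
  pose proof (exp_neg_ge_taylor3 eps (proj1 Heps)).
  split; split; nra.
Qed.

Lemma ln_1_add_le (y : R) : 0 <= y -> ln (1 + y) <= y - y ^ 2 / 2 + y ^ 3 / 3.
Proof.
  intros Hy.
  pose proof (le_of_is_derive_nonneg (fun t => t - t ^ 2 / 2 + t ^ 3 / 3 - ln (1 + t))
                (fun t => t ^ 3 / (1 + t)) 0 y Hy) as H.
  simpl in H. rewrite Rplus_0_r, ln_1 in H. simpl.
  enough (0 <= y - y * (y * 1) / 2 + y * (y * (y * 1)) / 3 - ln (1 + y)) by lra.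
  eapply Rle_trans; [|apply H]; [lra| |].
  - intros t Ht. auto_derive; [lra|field; lra].
  - intros t Ht. apply Rdiv_le_0_compat; [|lra]. simpl. assert (0 <= t * t) by nra. nra.
Qed.

Lemma ln_1_sub_le (x : R) : 0 <= x < 1 -> ln (1 - x) <= - x - x ^ 2 / 2.
Proof.
  intros Hx.
  pose proof (le_of_is_derive_nonneg (fun t => - t - t ^ 2 / 2 - ln (1 - t))
                (fun t => t ^ 2 / (1 - t)) 0 x (proj1 Hx)) as H.
  simpl in H. rewrite Rminus_0_r, ln_1 in H. simpl.
  enough (0 <= - x - x * (x * 1) / 2 - ln (1 - x)) by lra.
  eapply Rle_trans; [|apply H]; [lra| |].
  - intros t Ht. auto_derive; [lra|field; lra].
  - intros t Ht. apply Rdiv_le_0_compat; [nra|lra].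
Qed.

Lemma one_sub_cos_ge_sq (t : R) : 0 <= t <= PI -> t ^ 2 / 18 <= 1 - cos t.
Proof.
  intros Ht. replace t with (2 * (t / 2)) at 2 by field. rewrite cos_2a_sin.
  assert (Hsin : t / 2 - (t / 2) ^ 3 / 6 <= sin (t / 2)).
  { destruct (sin_bound (t / 2) 0) as [H _]; [lra|pose proof PI_RGT_0; lra|].
    unfold sin_approx, sin_term in H. simpl in H. lra. }
  pose proof PI_4 as Hpi.
  assert (Ht2 : (t / 2) ^ 2 <= 4) by nra.
  assert (t / 6 <= sin (t / 2)) by nra.
  nra.
Qed.

(** * Binomial convolutions and their generating function *)

Lemma fallR_succ (x : R) (i : nat) : fallR (x + 1) (S i) = (x + 1) * fallR x i.
Proof.
  induction i as [|i IH]; [simpl; ring|].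
  change (fallR (x + 1) (S (S i))) with (fallR (x + 1) (S i) * (x + 1 - INR (S i))).
  rewrite IH, S_INR. simpl. ring.
Qed.

Lemma gbin_0_r (x : R) : gbin x 0 = 1.
Proof. unfold gbin. simpl. field. Qed.

Lemma gbin_pascal (x : R) (i : nat) : gbin (x + 1) (S i) = gbin x (S i) + gbin x i.
Proof.
  unfold gbin. rewrite fallR_succ. simpl fallR.
  replace (fact (S i)) with (S i * fact i)%nat by reflexivity.
  rewrite mult_INR, S_INR.
  assert (0 < INR (fact i)) by (apply lt_0_INR, lt_O_fact).
  pose proof (pos_INR i).
  field. split; lra.
Qed.

Lemma gbin_nat_gt (b k : nat) : (b < k)%nat -> gbin (INR b) k = 0.
Proof.
  intros Hbk. unfold gbin.
  enough (fallR (INR b) k = 0) as -> by lra.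
  induction k as [|k IH]; [lia|].
  simpl. destruct (Nat.eq_dec b k) as [->|Hne]; [lra|].
  rewrite IH by lia. lra.
Qed.

(* [binom_conv a b k] is the coefficient of [w^k] in [(1 - w)^a (1 + w)^b]. *)
Definition binom_conv (a b : R) (k : nat) : R :=
  sum_f_R0 (fun i => gbin a i * (-1) ^ i * gbin b (k - i)) k.

Lemma q_coef_binom_conv (n : nat) (s y : Z) : (0 <= s - y)%Z ->
  q_coef n s y = binom_conv (INR n - IZR s) (IZR s) (Z.to_nat (s - y)).
Proof.
  intros H. unfold q_coef. destruct (Z.ltb_spec (s - y) 0); [lia|reflexivity].
Qed.

Lemma q_coef_neg (n : nat) (s y : Z) : (s - y < 0)%Z -> q_coef n s y = 0.
Proof.
  intros H. unfold q_coef. destruct (Z.ltb_spec (s - y) 0); [reflexivity|lia].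
Qed.

Lemma binom_conv_0_l (b : R) (k : nat) : binom_conv 0 b k = gbin b k.
Proof.
  unfold binom_conv. destruct k as [|k]; [simpl; rewrite gbin_0_r; ring|].
  rewrite decomp_sum by lia. simpl pred.
  rewrite sum_eq_R0.
  - rewrite gbin_0_r, Nat.sub_0_r. ring.
  - intros i _. rewrite (gbin_nat_gt 0) by lia. ring.
Qed.

Lemma binom_conv_succ_l_0 (a b : R) : binom_conv (a + 1) b 0 = binom_conv a b 0.
Proof. unfold binom_conv. simpl. rewrite !gbin_0_r. ring. Qed.

Lemma binom_conv_succ_l (a b : R) (k : nat) :
  binom_conv (a + 1) b (S k) = binom_conv a b (S k) - binom_conv a b k.
Proof.
  unfold binom_conv.
  rewrite !(decomp_sum _ (S k)) by lia. simpl pred.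
  rewrite (sum_eq _ (fun i => gbin a (S i) * (-1) ^ S i * gbin b (S k - S i)
                             - gbin a i * (-1) ^ i * gbin b (k - i))).
  - rewrite minus_sum, !gbin_0_r. ring.
  - intros i _. rewrite gbin_pascal. simpl Nat.sub. simpl pow. ring.
Qed.

Lemma binom_conv_nat_gt (a b k : nat) : (a + b < k)%nat ->
  binom_conv (INR a) (INR b) k = 0.
Proof.
  revert k. induction a as [|a IH]; intros k Hk.
  - rewrite binom_conv_0_l. apply gbin_nat_gt. lia.
  - destruct k as [|k]; [lia|].
    rewrite S_INR, binom_conv_succ_l, !IH by lia. ring.
Qed.

Open Scope C_scope.

Definition Cpoly (c : nat -> R) (z : C) (d : nat) : C :=
  sum_n (fun k => RtoC (c k) * z ^ k) d.

Lemma Cpoly_ext (c1 c2 : nat -> R) (z : C) (d : nat) :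
  (forall k, (k <= d)%nat -> c1 k = c2 k) -> Cpoly c1 z d = Cpoly c2 z d.
Proof.
  intros H. apply sum_n_ext_loc. intros k Hk. rewrite H by exact Hk. reflexivity.
Qed.

Lemma Cpoly_S (c : nat -> R) (z : C) (d : nat) :
  Cpoly c z (S d) = Cpoly c z d + RtoC (c (S d)) * z ^ S d.
Proof. unfold Cpoly. rewrite sum_Sn. reflexivity. Qed.

Lemma Cpoly_mul_1_add (u c : nat -> R) (s : R) (z : C) (d : nat) :
  c O = u O -> (forall k, (k <= d)%nat -> c (S k) = (u (S k) + s * u k)%R) ->
  Cpoly c z (S d) = (1 + RtoC s * z) * Cpoly u z d + RtoC (u (S d)) * z ^ S d.
Proof.
  intros H0 HS. induction d as [|d IH].
  - rewrite Cpoly_S, HS by lia. unfold Cpoly. rewrite !sum_O, H0.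
    rewrite RtoC_plus, RtoC_mult. simpl. ring.
  - rewrite Cpoly_S, IH by (intros; apply HS; lia). rewrite HS by lia.
    rewrite (Cpoly_S u z d), RtoC_plus, RtoC_mult. simpl. ring.
Qed.

Lemma Cpoly_gbin (b : nat) (z : C) : Cpoly (gbin (INR b)) z b = (1 + z) ^ b.
Proof.
  induction b as [|b IH].
  - unfold Cpoly. rewrite sum_O. simpl. rewrite gbin_0_r. apply injective_projections; simpl; ring.
  - rewrite S_INR.
    rewrite (Cpoly_mul_1_add (gbin (INR b)) _ 1%R) by
      (intros; rewrite ?gbin_pascal, ?gbin_0_r; ring).
    rewrite IH, gbin_nat_gt by lia.
    simpl. ring.
Qed.

Lemma Cpoly_binom_conv (a b : nat) (z : C) :
  Cpoly (binom_conv (INR a) (INR b)) z (a + b) = (1 - z) ^ a * (1 + z) ^ b.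
Proof.
  induction a as [|a IH].
  - simpl. rewrite (Cpoly_ext _ (gbin (INR b))) by (intros; apply binom_conv_0_l).
    rewrite Cpoly_gbin. ring.
  - rewrite S_INR. change (S a + b)%nat with (S (a + b)).
    rewrite (Cpoly_mul_1_add (binom_conv (INR a) (INR b)) _ (-1)%R) by
      (intros; rewrite ?binom_conv_succ_l, ?binom_conv_succ_l_0; ring).
    rewrite IH, binom_conv_nat_gt by lia.
    replace (RtoC (-1)) with (- (1)) by (apply injective_projections; simpl; ring).
    simpl. ring.
Qed.

Close Scope C_scope.

(** * Extracting a coefficient from the values on a circle *)

Definition polar (r t : R) : C := (r * cos t, r * sin t).

Lemma polar_mul (r r' t t' : R) : Cmult (polar r t) (polar r' t') = polar (r * r') (t + t').
Proof.
  unfold polar, Cmult. simpl. rewrite cos_plus, sin_plus.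
  apply injective_projections; simpl; ring.
Qed.

Lemma polar_pow (r t : R) (k : nat) : Cpow (polar r t) k = polar (r ^ k) (INR k * t).
Proof.
  induction k as [|k IH].
  - unfold polar. simpl. rewrite Rmult_0_l, cos_0, sin_0.
    apply injective_projections; simpl; ring.
  - simpl Cpow. rewrite IH, polar_mul, S_INR.
    replace (t + INR k * t) with ((INR k + 1) * t) by ring. simpl pow. reflexivity.
Qed.

Lemma Cmod_polar (r t : R) : 0 <= r -> Cmod (polar r t) = r.
Proof.
  intros Hr. unfold Cmod, polar. simpl.
  replace (r * cos t * (r * cos t * 1) + r * sin t * (r * sin t * 1)) with (r * r)
    by (pose proof (sin2_cos2 t) as H; unfold Rsqr in H; nra).
  apply sqrt_square, Hr.
Qed.

Lemma RtoC_mul_polar (a r t : R) : Cmult (RtoC a) (polar r t) = polar (a * r) t.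
Proof. unfold polar, RtoC, Cmult. apply injective_projections; simpl; ring. Qed.

Lemma Re_monomial_polar (a r t : R) (k M : nat) :
  Re (Cmult (Cmult (RtoC a) (Cpow (polar r t) k)) (polar 1 (- (INR M * t))))
  = a * r ^ k * cos ((INR k - INR M) * t).
Proof.
  rewrite polar_pow, RtoC_mul_polar, polar_mul. unfold polar, Re. simpl.
  replace (INR k * t + - (INR M * t)) with ((INR k - INR M) * t) by ring.
  ring.
Qed.

Lemma Re_Cpoly_polar (c : nat -> R) (r t : R) (d M : nat) :
  Re (Cmult (Cpoly c (polar r t) d) (polar 1 (- (INR M * t))))
  = sum_f_R0 (fun k => c k * r ^ k * cos ((INR k - INR M) * t)) d.
Proof.
  induction d as [|d IH].
  - unfold Cpoly. rewrite sum_O. apply Re_monomial_polar.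
  - rewrite Cpoly_S, Cmult_plus_distr_r, tech5.
    rewrite <- IH, <- Re_monomial_polar. reflexivity.
Qed.

Lemma sum_cos_telescope (phi : R) (m : nat) :
  2 * sin (phi / 2) * sum_f_R0 (fun j => cos (INR j * phi)) m
  = sin ((INR m + 1 / 2) * phi) + sin (phi / 2).
Proof.
  induction m as [|m IH].
  - simpl sum_f_R0. rewrite Rmult_0_l, cos_0.
    replace ((INR 0 + 1 / 2) * phi) with (phi / 2) by (simpl; field). ring.
  - rewrite tech5, Rmult_plus_distr_l, IH, S_INR.
    replace ((INR m + 1 / 2) * phi) with ((INR m + 1) * phi - phi / 2) by field.
    replace ((INR m + 1 + 1 / 2) * phi) with ((INR m + 1) * phi + phi / 2) by field.
    rewrite sin_plus, sin_minus. ring.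
Qed.

Lemma sum_cos_roots_of_unity (l m : nat) : (0 < l <= m)%nat ->
  sum_f_R0 (fun j => cos (INR j * (2 * PI * INR l / INR (S m)))) m = 0.
Proof.
  intros Hl. set (phi := 2 * PI * INR l / INR (S m)).
  assert (Hm : 0 < INR (S m)) by (apply lt_0_INR; lia).
  assert (Hl0 : 0 < INR l) by (apply lt_0_INR; lia).
  assert (HlS : INR l < INR (S m)) by (apply lt_INR; lia).
  assert (Hsin : 0 < sin (phi / 2)).
  { pose proof PI_RGT_0. apply sin_gt_0; unfold phi.
    - apply Rdiv_lt_0_compat; [|lra]. apply Rdiv_lt_0_compat; [|lra].
      apply Rmult_lt_0_compat; lra.
    - replace (2 * PI * INR l / INR (S m) / 2) with (PI * (INR l / INR (S m))) by (field; lra).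
      assert (INR l / INR (S m) < 1) by (apply (Rdiv_lt_1 (INR l)); lra).
      rewrite <- (Rmult_1_r PI) at 2. apply Rmult_lt_compat_l; lra. }
  pose proof (sum_cos_telescope phi m) as Htele.
  replace ((INR m + 1 / 2) * phi) with (- (phi / 2) + 2 * INR l * PI) in Htele
    by (unfold phi; rewrite S_INR in *; field; lra).
  rewrite sin_period, sin_neg in Htele.
  apply Rmult_eq_reg_l with (2 * sin (phi / 2)); lra.
Qed.

Definition grid (m j : nat) : R := INR j * (2 * PI / INR (S m)).

Lemma sum_cos_grid (k M m : nat) : (k <= M + m)%nat -> (M <= k + m)%nat ->
  sum_f_R0 (fun j => cos ((INR k - INR M) * grid m j)) m
  = if Nat.eq_dec k M then INR (S m) else 0.
Proof.
  intros Hk HM. unfold grid.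
  assert (0 < INR (S m)) by (apply lt_0_INR; lia).
  destruct (Nat.eq_dec k M) as [<-|Hne].
  - rewrite (sum_eq _ (fun _ => 1)) by (intros; rewrite Rminus_diag, Rmult_0_l; apply cos_0).
    rewrite sum_cte. ring.
  - destruct (Nat.lt_ge_cases M k).
    + rewrite <- (sum_cos_roots_of_unity (k - M) m) by lia.
      apply sum_eq. intros j _. f_equal. rewrite minus_INR by lia. field. lra.
    + rewrite <- (sum_cos_roots_of_unity (M - k) m) by lia.
      apply sum_eq. intros j _. rewrite <- cos_neg. f_equal.
      rewrite minus_INR by lia. field. lra.
Qed.

Lemma sum_f_R0_swap (u : nat -> nat -> R) (m n : nat) :
  sum_f_R0 (fun i => sum_f_R0 (u i) n) m = sum_f_R0 (fun j => sum_f_R0 (fun i => u i j) m) n.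
Proof.
  transitivity (sum_n (fun i => sum_n (u i) n) m).
  - rewrite sum_n_Reals. apply sum_eq. intros i _. symmetry. apply sum_n_Reals.
  - rewrite sum_n_switch, sum_n_Reals. apply sum_eq. intros j _. apply sum_n_Reals.
Qed.

Lemma sum_f_R0_delta (f : nat -> R) (A : R) (M d : nat) : (M <= d)%nat ->
  sum_f_R0 (fun k => f k * (if Nat.eq_dec k M then A else 0)) d = f M * A.
Proof.
  induction d as [|d IH]; intros HM.
  - replace M with 0%nat by lia. simpl. reflexivity.
  - rewrite tech5. destruct (Nat.eq_dec (S d) M) as [<-|Hne].
    + rewrite sum_eq_R0; [ring|]. intros k Hk.
      destruct (Nat.eq_dec k (S d)); [lia|ring].
    + rewrite IH by lia. ring.
Qed.

Lemma grid_coef (c : nat -> R) (r : R) (d M m : nat) : (M <= d <= m)%nat ->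
  INR (S m) * (c M * r ^ M)
  = sum_f_R0 (fun j => Re (Cmult (Cpoly c (polar r (grid m j)) d)
                                 (polar 1 (- (INR M * grid m j))))) m.
Proof.
  intros Hd.
  rewrite (sum_eq _ (fun j => sum_f_R0 (fun k => c k * r ^ k * cos ((INR k - INR M) * grid m j)) d))
    by (intros; apply Re_Cpoly_polar).
  rewrite sum_f_R0_swap.
  rewrite (sum_eq _ (fun k => c k * r ^ k * (if Nat.eq_dec k M then INR (S m) else 0))).
  - rewrite sum_f_R0_delta by lia. ring.
  - intros k Hk. rewrite <- sum_cos_grid by lia.
    rewrite scal_sum. apply sum_eq. intros. ring.
Qed.

Lemma coef_le_grid_sum (c : nat -> R) (r : R) (d M m : nat) : 0 <= r -> (M <= d <= m)%nat ->
  INR (S m) * (Rabs (c M) * r ^ M)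
  <= sum_f_R0 (fun j => Cmod (Cpoly c (polar r (grid m j)) d)) m.
Proof.
  intros Hr Hd.
  replace (INR (S m) * (Rabs (c M) * r ^ M)) with (Rabs (INR (S m) * (c M * r ^ M))).
  2:{ rewrite !Rabs_mult, Rabs_pos_eq, (Rabs_pos_eq (r ^ M)); auto using pos_INR, pow_le. }
  rewrite (grid_coef c r d M m Hd).
  eapply Rle_trans; [apply Rsum_abs|]. apply sum_Rle. intros j _.
  eapply Rle_trans; [apply re_le_Cmod|].
  rewrite Cmod_mult, Cmod_polar by lra. lra.
Qed.

(** * The saddle-point bound *)

Lemma Cmod_1_sub_polar_sq (r t : R) :
  Cmod (Cminus 1 (polar r t)) ^ 2 = (1 - r) ^ 2 + 2 * r * (1 - cos t).
Proof.
  rewrite Cmod2_alt. unfold polar, Cminus, Cplus, Copp. simpl.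
  pose proof (sin2_cos2 t) as H. unfold Rsqr in H. nra.
Qed.

Lemma Cmod_1_add_polar_sq (r t : R) :
  Cmod (Cplus 1 (polar r t)) ^ 2 = (1 + r) ^ 2 - 2 * r * (1 - cos t).
Proof.
  rewrite Cmod2_alt. unfold polar, Cplus. simpl.
  pose proof (sin2_cos2 t) as H. unfold Rsqr in H. nra.
Qed.

(* [saddle_curvature a b r] is the second derivative in [t] of
   [- ln |(1 - r e^{it})^a (1 + r e^{it})^b|] at [t = 0]. *)
Definition saddle_curvature (a b : nat) (r : R) : R :=
  r * (INR b / (1 + r) ^ 2 - INR a / (1 - r) ^ 2).

Lemma Cmod_binom_gf_polar (a b : nat) (r t : R) : 0 <= r < 1 ->
  Cmod (Cmult (Cpow (Cminus 1 (polar r t)) a) (Cpow (Cplus 1 (polar r t)) b))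
  <= (1 - r) ^ a * (1 + r) ^ b * exp (- saddle_curvature a b r * (1 - cos t)).
Proof.
  intros Hr. rewrite Cmod_mult, !Cmod_pow.
  set (A := (1 - r) ^ 2). set (B := (1 + r) ^ 2). set (v := 2 * r * (1 - cos t)).
  pose proof (COS_bound t).
  assert (HA : 0 < A) by (apply pow_lt; lra).
  assert (HB : 0 < B) by (apply pow_lt; lra).
  assert (Hv : 0 <= v <= B) by (unfold v, B; split; nra).
  apply Rsqr_incr_0.
  2:{ apply Rmult_le_pos; apply pow_le, Cmod_ge_0. }
  2:{ apply Rmult_le_pos; [apply Rmult_le_pos; apply pow_le; lra|]. apply Rlt_le, exp_pos. }
  unfold Rsqr.
  replace (Cmod (Cminus 1 (polar r t)) ^ a * Cmod (Cplus 1 (polar r t)) ^ b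
           * (Cmod (Cminus 1 (polar r t)) ^ a * Cmod (Cplus 1 (polar r t)) ^ b))
    with ((Cmod (Cminus 1 (polar r t)) ^ 2) ^ a * (Cmod (Cplus 1 (polar r t)) ^ 2) ^ b)
    by (rewrite <- !pow_mult, !(Nat.mul_comm 2), !pow_mult; ring).
  rewrite Cmod_1_sub_polar_sq, Cmod_1_add_polar_sq. fold A B v.
  replace (A + v) with (A * (1 + v / A)) by (field; lra).
  replace (B - v) with (B * (1 + - (v / B))) by (field; lra).
  assert (Hexp : exp (- saddle_curvature a b r * (1 - cos t)) * exp (- saddle_curvature a b r * (1 - cos t))
                 = exp (INR a * (v / A)) * exp (INR b * - (v / B))).
  { rewrite <- !exp_plus. f_equal. unfold saddle_curvature, v. fold A B. field. lra. }
  apply Rle_trans with (A ^ a * exp (INR a * (v / A)) * (B ^ b * exp (INR b * - (v / B)))).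
  2:{ right. transitivity (A ^ a * B ^ b * (exp (INR a * (v / A)) * exp (INR b * - (v / B)))); [ring|].
      rewrite <- Hexp. unfold A, B. rewrite <- !pow_mult, !(Nat.mul_comm 2), !pow_mult. ring. }
  rewrite !Rpow_mult_distr.
  assert (0 <= v / A) by (apply Rdiv_le_0_compat; lra).
  assert (v / B <= 1) by (apply (Rdiv_le_1 v); lra).
  apply Rmult_le_compat.
  - apply Rmult_le_pos; apply pow_le; lra.
  - apply Rmult_le_pos; apply pow_le; lra.
  - apply Rmult_le_compat_l; [apply pow_le; lra|]. apply pow_1_add_le_exp. lra.
  - apply Rmult_le_compat_l; [apply pow_le; lra|]. apply pow_1_add_le_exp. lra.
Qed.

Lemma cos_grid_reflect (m j : nat) : (j <= S m)%nat -> cos (grid m (S m - j)) = cos (grid m j).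
Proof.
  intros Hj. unfold grid. rewrite minus_INR by exact Hj.
  assert (0 < INR (S m)) by (apply lt_0_INR; lia).
  replace ((INR (S m) - INR j) * (2 * PI / INR (S m))) with (2 * PI - INR j * (2 * PI / INR (S m)))
    by (field; lra).
  rewrite cos_minus, cos_2PI, sin_2PI. ring.
Qed.

Lemma one_sub_cos_grid_ge (m d : nat) : (2 * d <= S m)%nat ->
  (INR d / INR (S m)) ^ 2 <= 1 - cos (grid m d).
Proof.
  intros Hd. unfold grid.
  assert (HS : 0 < INR (S m)) by (apply lt_0_INR; lia).
  assert (Hq : 0 <= INR d / INR (S m) <= 1 / 2).
  { split; [apply Rdiv_le_0_compat; [apply pos_INR|lra]|].
    assert (2 * INR d <= INR (S m)).
    { replace (2 * INR d) with (INR (2 * d)) by (rewrite mult_INR; simpl; ring).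
      apply le_INR, Hd. }
    apply Rle_div_l; lra. }
  pose proof PI_RGT_0. assert (3 <= PI) by (pose proof PI2_3_2; lra).
  replace (INR d * (2 * PI / INR (S m))) with (2 * PI * (INR d / INR (S m))) by (field; lra).
  eapply Rle_trans; [|apply one_sub_cos_ge_sq; split; nra].
  set (q := INR d / INR (S m)) in *.
  replace ((2 * PI * q) ^ 2 / 18) with (PI ^ 2 * q ^ 2 * (2 / 9)) by field.
  assert (9 <= PI ^ 2) by nra. assert (0 <= q ^ 2) by nra. nra.
Qed.

Lemma exp_grid_le (K : R) (m j : nat) : 0 <= K -> (j <= m)%nat ->
  exp (- K * (1 - cos (grid m j)))
  <= exp (- (K / INR (S m) ^ 2 * INR j ^ 2))
     + exp (- (K / INR (S m) ^ 2 * INR (S m - j) ^ 2)).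
Proof.
  intros HK Hj.
  assert (HS : 0 < INR (S m)) by (apply lt_0_INR; lia).
  assert (Hbound : forall d, (2 * d <= S m)%nat ->
            exp (- K * (1 - cos (grid m d))) <= exp (- (K / INR (S m) ^ 2 * INR d ^ 2))).
  { intros d Hd. apply exp_le_exp.
    replace (K / INR (S m) ^ 2 * INR d ^ 2) with (K * (INR d / INR (S m)) ^ 2) by (field; lra).
    pose proof (one_sub_cos_grid_ge m d Hd). nra. }
  pose proof (exp_pos (- (K / INR (S m) ^ 2 * INR j ^ 2))).
  pose proof (exp_pos (- (K / INR (S m) ^ 2 * INR (S m - j) ^ 2))).
  destruct (le_lt_dec (2 * j) (S m)) as [Hle|Hlt].
  - pose proof (Hbound j Hle). lra.
  - rewrite <- (cos_grid_reflect m j) by lia.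
    pose proof (Hbound (S m - j)%nat ltac:(lia)). lra.
Qed.

Lemma sum_f_R0_reflect (f : nat -> R) (m : nat) :
  sum_f_R0 (fun j => f (m - j)%nat) m = sum_f_R0 f m.
Proof.
  induction m as [|m IH]; [reflexivity|].
  rewrite decomp_sum, tech5 by lia. simpl pred. rewrite <- IH.
  rewrite Nat.sub_0_r. simpl Nat.sub. ring.
Qed.

(* Terms with [d <= J] are at most [1]; beyond [J], [exp (- al d^2) <= 1 / (al d (d - 1))]
   telescopes. *)
Lemma sum_exp_neg_sq_le (al : R) (J D : nat) : 0 < al -> (1 <= J)%nat ->
  sum_f_R0 (fun d => exp (- (al * INR d ^ 2))) D <= INR J + 1 + 1 / (al * INR J).
Proof.
  intros Hal HJ.
  assert (HJr : 1 <= INR J) by (apply (le_INR 1); exact HJ).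
  assert (Hle1 : forall d : nat, exp (- (al * INR d ^ 2)) <= 1).
  { intros d. rewrite <- exp_0. apply exp_le_exp. pose proof (pos_INR d). nra. }
  assert (Hhead : forall D', (D' <= J)%nat ->
            sum_f_R0 (fun d => exp (- (al * INR d ^ 2))) D' <= INR J + 1).
  { intros D' HD'. eapply Rle_trans; [apply (sum_Rle _ (fun _ => 1)); intros; apply Hle1|].
    rewrite sum_cte, S_INR. apply le_INR in HD'. lra. }
  assert (Htail : forall D, (J <= D)%nat ->
            sum_f_R0 (fun d => exp (- (al * INR d ^ 2))) D
            <= INR J + 1 + (1 / (al * INR J) - 1 / (al * INR D))).
  { clear D. induction 1 as [|D HJD IH].
    - pose proof (Hhead J (le_n J)). lra.
    - rewrite tech5, S_INR.
      assert (HD : 1 <= INR D) by (apply (le_INR 1); lia).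
      assert (exp (- (al * (INR D + 1) ^ 2)) <= 1 / (al * INR D) - 1 / (al * (INR D + 1))).
      { eapply Rle_trans; [apply exp_neg_le_inv; apply Rmult_lt_0_compat; [lra|apply pow_lt; lra]|].
        replace (1 / (al * INR D) - 1 / (al * (INR D + 1))) with (1 / (al * (INR D * (INR D + 1))))
          by (field; lra).
        apply Rmult_le_compat_l; [lra|]. apply Rinv_le_contravar; [apply Rmult_lt_0_compat; nra|].
        apply Rmult_le_compat_l; [lra|]. nra. }
      lra. }
  destruct (le_lt_dec D J) as [HD|HD].
  - pose proof (Hhead D HD). assert (0 < 1 / (al * INR J)) by (apply Rdiv_lt_0_compat; nra). lra.
  - pose proof (Htail D ltac:(lia)).
    assert (0 < 1 / (al * INR D)) by (apply Rdiv_lt_0_compat; [lra|]; apply Rmult_lt_0_compat; [lra|apply lt_0_INR; lia]).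
    lra.
Qed.

Lemma sum_exp_grid_le (K tau : R) (m : nat) : 0 < tau -> tau ^ 2 <= K -> tau <= INR (S m) ->
  sum_f_R0 (fun j => exp (- K * (1 - cos (grid m j)))) m <= INR (S m) * (8 / tau).
Proof.
  intros Htau HK HtauN.
  set (N := INR (S m)) in *. set (al := K / N ^ 2).
  set (g := fun d : nat => exp (- (al * INR d ^ 2))).
  assert (HN : 0 < N) by lra.
  assert (HK0 : 0 < K) by nra.
  assert (Hal : 0 < al) by (apply Rdiv_lt_0_compat; [lra|apply pow_lt; lra]).
  assert (Hg0 : forall d, 0 <= g d) by (intros; apply Rlt_le, exp_pos).
  assert (Hsplit : sum_f_R0 (fun j => exp (- K * (1 - cos (grid m j)))) m
                   <= sum_f_R0 g m + sum_f_R0 (fun j => g (S (m - j))) m).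
  { rewrite <- plus_sum. apply sum_Rle. intros j Hj.
    replace (S (m - j)) with (S m - j)%nat by lia. apply exp_grid_le; [lra|exact Hj]. }
  assert (Hfwd : sum_f_R0 g m <= sum_f_R0 g (S m)) by (rewrite tech5; pose proof (Hg0 (S m)); lra).
  assert (Hbwd : sum_f_R0 (fun j => g (S (m - j))) m <= sum_f_R0 g (S m)).
  { rewrite (sum_f_R0_reflect (fun d => g (S d))), (decomp_sum g (S m)) by lia.
    simpl pred. pose proof (Hg0 0%nat). lra. }
  destruct (nfloor_ex (N / tau)) as [n Hn]; [apply Rlt_le, Rdiv_lt_0_compat; lra|].
  assert (HJ : N / tau <= INR (S n) <= N / tau + 1) by (rewrite S_INR; lra).
  assert (HNtau : 1 <= N / tau) by (apply Rle_div_r; lra).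
  assert (Hinv : 1 / (al * INR (S n)) <= N / tau).
  { unfold al. replace (1 / (K / N ^ 2 * INR (S n))) with (N ^ 2 / (K * INR (S n))) by (field; lra).
    apply Rle_div_l; [apply Rmult_lt_0_compat; lra|].
    replace (N / tau * (K * INR (S n))) with (N * (K / tau) * INR (S n)) by (field; lra).
    assert (tau <= K / tau) by (apply Rle_div_r; nra).
    assert (N * tau <= N * (K / tau) * (N / tau)) by
      (replace (N * tau) with (N * tau * 1) by ring; apply Rmult_le_compat; nra).
    replace (N ^ 2) with (N * tau * (N / tau)) by (field; lra).
    apply Rmult_le_compat; nra. }
  pose proof (sum_exp_neg_sq_le al (S n) (S m) Hal ltac:(lia)) as Htail. fold g in Htail.
  replace (N * (8 / tau)) with (8 * (N / tau)) by (field; lra).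
  lra.
Qed.

Lemma binom_conv_saddle_bound (a b M : nat) (r tau : R) : 0 < r < 1 -> 0 < tau ->
  tau ^ 2 <= saddle_curvature a b r ->
  Rabs (binom_conv (INR a) (INR b) M) * r ^ M <= (1 - r) ^ a * (1 + r) ^ b * (8 / tau).
Proof.
  intros Hr Htau HK.
  set (F := (1 - r) ^ a * (1 + r) ^ b).
  assert (HF : 0 <= F) by (apply Rmult_le_pos; apply pow_le; lra).
  assert (H8 : 0 < 8 / tau) by (apply Rdiv_lt_0_compat; lra).
  destruct (le_lt_dec M (a + b)) as [HM|HM].
  2:{ rewrite binom_conv_nat_gt, Rabs_R0, Rmult_0_l by exact HM. nra. }
  destruct (INR_unbounded tau) as [m Hm].
  set (m' := Nat.max (a + b) m).
  assert (Htaum : tau <= INR (S m')).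
  { assert (INR m <= INR (S m')) by (apply le_INR; lia). lra. }
  assert (HS : 0 < INR (S m')) by (apply lt_0_INR; lia).
  apply Rmult_le_reg_l with (INR (S m')); [exact HS|].
  eapply Rle_trans; [apply coef_le_grid_sum with (d := (a + b)%nat); [lra|lia]|].
  apply Rle_trans with (F * sum_f_R0 (fun j => exp (- saddle_curvature a b r * (1 - cos (grid m' j)))) m').
  { rewrite scal_sum. apply sum_Rle. intros j _.
    rewrite Cpoly_binom_conv, Rmult_comm. apply Cmod_binom_gf_polar. lra. }
  replace (INR (S m') * (F * (8 / tau))) with (F * (INR (S m') * (8 / tau))) by ring.
  apply Rmult_le_compat_l; [exact HF|].
  apply sum_exp_grid_le; assumption.
Qed.

(** * The saddle point in the scaling of Q_n *)

Lemma sqrt2_bounds : 1.414 < sqrt 2 < 1.4143.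
Proof.
  pose proof (sqrt_sqrt 2 ltac:(lra)). pose proof (sqrt_pos 2).
  split; destruct (Rlt_le_dec 1.414 (sqrt 2)), (Rlt_le_dec (sqrt 2) 1.4143); nra.
Qed.

Lemma sqrt2_sq : sqrt 2 ^ 2 = 2.
Proof. simpl. rewrite Rmult_1_r. apply sqrt_sqrt. lra. Qed.

Lemma inv_sqrt2_bounds : 0.7070 < 1 / sqrt 2 < 0.7073.
Proof.
  pose proof sqrt2_bounds.
  split; [apply (Rlt_div_r _ 1 (sqrt 2))|apply (Rlt_div_l 1 _ (sqrt 2))]; lra.
Qed.

Lemma ln_sqrt2 : ln (sqrt 2) = ln 2 / 2.
Proof. rewrite <- Rpower_sqrt by lra. unfold Rpower. rewrite ln_exp. field. Qed.

(* For [2 s = n (1 + 1 / sqrt 2)] and [M = s - n / sqrt 2], the phase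
   [w^(-M) (1 - w)^(n - s) (1 + w)^s] has a double critical point at
   [w = sqrt 2 - 1 = exp (- lam)]. *)
Definition lam : R := ln (sqrt 2 + 1).

Lemma lam_pos : 0 < lam.
Proof.
  pose proof sqrt2_bounds. unfold lam. rewrite <- ln_1. apply ln_increasing; lra.
Qed.

Lemma exp_neg_lam : exp (- lam) = sqrt 2 - 1.
Proof.
  pose proof sqrt2_bounds. pose proof (sqrt_sqrt 2 ltac:(lra)).
  unfold lam. rewrite exp_Ropp, exp_ln by lra. field_simplify_eq; nra.
Qed.

Definition saddle_radius (eps : R) : R := exp (- (lam + eps)).

Lemma one_sub_saddle_radius (eps : R) :
  1 - saddle_radius eps = (2 - sqrt 2) * (1 + (1 - exp (- eps)) / sqrt 2).
Proof.
  pose proof sqrt2_bounds. pose proof (sqrt_sqrt 2 ltac:(lra)).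
  unfold saddle_radius. rewrite Ropp_plus_distr, exp_plus, exp_neg_lam. field_simplify_eq; [|lra]. rewrite sqrt2_sq. ring.
Qed.

Lemma one_add_saddle_radius (eps : R) :
  1 + saddle_radius eps = sqrt 2 * (1 - (1 - 1 / sqrt 2) * (1 - exp (- eps))).
Proof.
  pose proof sqrt2_bounds.
  unfold saddle_radius. rewrite Ropp_plus_distr, exp_plus, exp_neg_lam.
  field_simplify_eq; [|lra]. rewrite ?sqrt2_sq. ring.
Qed.

Lemma ln_one_sub_saddle_radius_le (eps : R) : 0 <= eps ->
  let y := (1 - exp (- eps)) / sqrt 2 in
  ln (1 - saddle_radius eps) <= ln 2 / 2 - lam + (y - y ^ 2 / 2 + y ^ 3 / 3).
Proof.
  intros Heps y.
  pose proof sqrt2_bounds. pose proof (sqrt_sqrt 2 ltac:(lra)).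
  assert (Hy : 0 <= y).
  { apply Rdiv_le_0_compat; [|lra]. pose proof (exp_le_exp (- eps) 0 ltac:(lra)).
    rewrite exp_0 in *. lra. }
  rewrite one_sub_saddle_radius. fold y.
  replace (2 - sqrt 2) with (sqrt 2 * exp (- lam)) by (rewrite exp_neg_lam; nra).
  rewrite !ln_mult, ln_sqrt2, ln_exp by (try apply exp_pos; try apply Rmult_lt_0_compat; try apply exp_pos; lra).
  pose proof (ln_1_add_le y Hy). lra.
Qed.

Lemma ln_one_add_saddle_radius_le (eps : R) : 0 <= eps ->
  let y := (1 - 1 / sqrt 2) * (1 - exp (- eps)) in
  ln (1 + saddle_radius eps) <= ln 2 / 2 + (- y - y ^ 2 / 2).
Proof.
  intros Heps y.
  pose proof sqrt2_bounds.
  assert (Hj : 0 < 1 / sqrt 2 < 1)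
    by (split; [apply Rdiv_lt_0_compat|apply (Rdiv_lt_1 1)]; lra).
  assert (Hexp : 0 < exp (- eps) <= 1).
  { split; [apply exp_pos|]. rewrite <- exp_0. apply exp_le_exp. lra. }
  assert (Hy : 0 <= y < 1) by (unfold y; split; nra).
  rewrite one_add_saddle_radius. fold y.
  rewrite ln_mult, ln_sqrt2 by lra.
  pose proof (ln_1_sub_le y Hy). lra.
Qed.

Lemma inv_sq_one_sub_saddle_radius_le (eps : R) : 0 <= eps ->
  / (1 - saddle_radius eps) ^ 2 <= (3 + 2 * sqrt 2) / 2.
Proof.
  intros Heps. pose proof sqrt2_bounds. pose proof sqrt2_sq.
  assert (Hp : 0 <= (1 - exp (- eps)) / sqrt 2).
  { apply Rdiv_le_0_compat; [|lra]. pose proof (exp_le_exp (- eps) 0 ltac:(lra)).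
    rewrite exp_0 in *. lra. }
  assert (H6 : (2 - sqrt 2) ^ 2 = 6 - 4 * sqrt 2) by (ring_simplify; rewrite sqrt2_sq; ring).
  assert (E2 : (3 + 2 * sqrt 2) * (6 - 4 * sqrt 2) = 2) by (ring_simplify; rewrite sqrt2_sq; ring).
  replace ((3 + 2 * sqrt 2) / 2) with (/ (6 - 4 * sqrt 2)).
  2:{ apply Rmult_eq_reg_l with (6 - 4 * sqrt 2); [|nra].
      rewrite Rinv_r by nra.
      replace ((6 - 4 * sqrt 2) * ((3 + 2 * sqrt 2) / 2)) with ((3 + 2 * sqrt 2) * (6 - 4 * sqrt 2) / 2)
        by field.
      rewrite E2. field. }
  rewrite one_sub_saddle_radius, Rpow_mult_distr, H6.
  apply Rinv_le_contravar; [nra|].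
  assert (1 <= (1 + (1 - exp (- eps)) / sqrt 2) ^ 2) by nra. nra.
Qed.

Lemma inv_sq_one_add_saddle_radius_ge (eps : R) : 0 <= eps ->
  let q := (1 - 1 / sqrt 2) * (1 - exp (- eps)) in
  (1 + 2 * q) / 2 <= / (1 + saddle_radius eps) ^ 2.
Proof.
  intros Heps q. pose proof inv_sqrt2_bounds.
  assert (Hexp : 0 < exp (- eps) <= 1).
  { split; [apply exp_pos|]. rewrite <- exp_0. apply exp_le_exp. lra. }
  assert (Hq : 0 <= q <= 0.3) by (unfold q; split; nra).
  rewrite one_add_saddle_radius. fold q.
  rewrite Rpow_mult_distr, sqrt2_sq.
  assert (0 < (1 - q) ^ 2) by (apply pow_lt; lra).
  assert (Hcub : (1 + 2 * q) * (1 - q) ^ 2 <= 1).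
  { replace ((1 + 2 * q) * (1 - q) ^ 2) with (1 - q ^ 2 * (3 - 2 * q)) by ring.
    assert (0 <= q ^ 2) by nra. nra. }
  apply (Rmult_le_reg_r (2 * (1 - q) ^ 2)); [lra|].
  rewrite Rinv_l by lra. lra.
Qed.

(* The [e^2] term is nonnegative because [2 s <= nr (1 + j) + ell]. *)
Lemma saddle_log_poly (nr s j e ell : R) :
  j * j = 1 / 2 -> 0.7 < j < 0.71 -> 0 < e -> 0 <= s <= nr -> 2 * s <= nr * (1 + j) + ell ->
  let pl := e - e ^ 2 / 2 in
  (nr - s) * (j * (pl + e ^ 3 / 6)) - (nr - s) * (pl ^ 2 / 4) + (nr - s) * (j * e ^ 3 / 6)
    - s * ((1 - j) * pl) - s * ((3 / 2 - 2 * j) * pl ^ 2 / 2) + (s - nr * j) * e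
  <= e ^ 2 / 2 * ell * j + nr * e ^ 3.
Proof.
  intros Hj2 Hj He Hs Hsl pl.
  assert (N1 : 0 <= e ^ 2 / 2 * (nr * j + nr / 2 + ell * j - 2 * s * j)).
  { apply Rmult_le_pos; [nra|].
    assert (2 * s * j <= (nr * (1 + j) + ell) * j) by (apply Rmult_le_compat_r; lra).
    replace ((nr * (1 + j) + ell) * j) with (nr * j + nr * (j * j) + ell * j) in * by ring.
    rewrite Hj2 in *. lra. }
  assert (N2 : 0 <= e ^ 3 * ((nr - s) * (3 / 4 - j / 3) + s * (1 / 4 + j))).
  { apply Rmult_le_pos; [apply pow_le; lra|].
    apply Rplus_le_le_0_compat; apply Rmult_le_pos; lra. }
  assert (N3 : 0 <= (nr - s) * e ^ 4 / 16 + s * (3 / 16 - j / 4) * e ^ 4).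
  { assert (0 <= e ^ 4) by (apply pow_le; lra).
    apply Rplus_le_le_0_compat; [|apply Rmult_le_pos; [apply Rmult_le_pos|]]; nra. }
  assert (E : e ^ 2 / 2 * ell * j + nr * e ^ 3
      - ((nr - s) * (j * (pl + e ^ 3 / 6)) - (nr - s) * (pl ^ 2 / 4) + (nr - s) * (j * e ^ 3 / 6)
         - s * ((1 - j) * pl) - s * ((3 / 2 - 2 * j) * pl ^ 2 / 2) + (s - nr * j) * e)
    = e ^ 2 / 2 * (nr * j + nr / 2 + ell * j - 2 * s * j)
      + e ^ 3 * ((nr - s) * (3 / 4 - j / 3) + s * (1 / 4 + j))
      + ((nr - s) * e ^ 4 / 16 + s * (3 / 16 - j / 4) * e ^ 4)) by (unfold pl; field).
  lra.
Qed.

Lemma saddle_log_taylor (nr s j e p ell : R) :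
  j * j = 1 / 2 -> 0.7 < j < 0.71 -> 0 < e <= 0.4 ->
  e - e ^ 2 / 2 <= p <= e - e ^ 2 / 2 + e ^ 3 / 6 ->
  0 <= s <= nr -> 2 * s <= nr * (1 + j) + ell ->
  (nr - s) * (j * p - (j * p) ^ 2 / 2 + (j * p) ^ 3 / 3)
    + s * (- ((1 - j) * p) - ((1 - j) * p) ^ 2 / 2) + (s - nr * j) * e
  <= e ^ 2 / 2 * ell * j + nr * e ^ 3.
Proof.
  intros Hj2 Hj He Hp Hs Hsl.
  pose proof (saddle_log_poly nr s j e ell Hj2 Hj (proj1 He) Hs Hsl) as Hpoly.
  set (pl := e - e ^ 2 / 2) in Hp, Hpoly.
  assert (Hpl : 0 <= pl) by (unfold pl; assert (e ^ 2 <= 0.4 * e) by (simpl; nra); lra).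
  assert (Hpe : p <= e) by (unfold pl in Hp; assert (e ^ 3 <= 0.4 * e ^ 2) by (simpl; nra); lra).
  assert (Hm : 0 <= nr - s) by lra.
  assert (Hsq : pl ^ 2 <= p ^ 2) by (apply pow_incr; lra).
  assert (A1 : (nr - s) * (j * p) <= (nr - s) * (j * (pl + e ^ 3 / 6))).
  { apply Rmult_le_compat_l; [lra|]. apply Rmult_le_compat_l; lra. }
  assert (A2 : (nr - s) * (pl ^ 2 / 4) <= (nr - s) * ((j * p) ^ 2 / 2)).
  { apply Rmult_le_compat_l; [lra|].
    replace ((j * p) ^ 2 / 2) with (j * j * p ^ 2 / 2) by field. rewrite Hj2. lra. }
  assert (A3 : (nr - s) * ((j * p) ^ 3 / 3) <= (nr - s) * (j * e ^ 3 / 6)).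
  { apply Rmult_le_compat_l; [lra|].
    replace ((j * p) ^ 3 / 3) with (j * j * j * p ^ 3 / 3) by field. rewrite Hj2.
    assert (p ^ 3 <= e ^ 3) by (apply pow_incr; lra). nra. }
  assert (A4 : s * ((1 - j) * pl) <= s * ((1 - j) * p)).
  { apply Rmult_le_compat_l; [lra|]. apply Rmult_le_compat_l; lra. }
  assert (A5 : s * ((3 / 2 - 2 * j) * pl ^ 2 / 2) <= s * (((1 - j) * p) ^ 2 / 2)).
  { apply Rmult_le_compat_l; [lra|].
    replace (((1 - j) * p) ^ 2 / 2) with ((1 - 2 * j + j * j) * p ^ 2 / 2) by field.
    rewrite Hj2. nra. }
  lra.
Qed.

(* [T] stands for [n^(1/3)], [A] for [|L|], [ell] for [2^(-1/6) L n^(2/3)] and [s] for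
   [floor (b_n L / 2)]; the circle of the saddle-point bound has radius
   [exp (- (lam + eps))] with [eps = 40 (A + 1) / T]. *)
Section LargeScale.

Variables A T : R.
Hypothesis HA : 0 <= A.
Hypothesis HT : 100 * (A + 1) <= T.

Lemma large_scale_eps : 0 < 40 * (A + 1) / T <= 0.4.
Proof.
  split; [apply Rdiv_lt_0_compat; lra|].
  apply Rle_div_l; lra.
Qed.

Variables s ell : R.
Hypothesis Hell : Rabs ell <= A * T ^ 2.
Hypothesis Hs : T ^ 3 * (1 + 1 / sqrt 2) + ell - 2 <= 2 * s <= T ^ 3 * (1 + 1 / sqrt 2) + ell.

Lemma large_scale_ell_small : Rabs ell + 2 <= T ^ 3 / 100.
Proof.
  assert (A * T ^ 2 <= (T / 100 - 1) * T ^ 2) by (apply Rmult_le_compat_r; nra).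
  assert (10000 <= T ^ 2) by nra.
  replace (T ^ 3 / 100) with (T / 100 * T ^ 2) by field.
  nra.
Qed.

Lemma large_scale_s_bounds : T ^ 3 / 2 <= s <= T ^ 3.
Proof.
  pose proof large_scale_ell_small. pose proof sqrt2_bounds.
  pose proof (Rle_abs ell). pose proof (Rle_abs (- ell)). rewrite Rabs_Ropp in *.
  pose proof inv_sqrt2_bounds as Hj.
  assert (0 <= T ^ 3) by (apply pow_le; lra).
  assert (0.7070 * T ^ 3 <= T ^ 3 * (1 / sqrt 2) <= 0.7073 * T ^ 3) by (split; nra).
  lra.
Qed.

Lemma saddle_curvature_large :
  let r := saddle_radius (40 * (A + 1) / T) in
  (T / 3) ^ 2 <= r * (s / (1 + r) ^ 2 - (T ^ 3 - s) / (1 - r) ^ 2).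
Proof.
  intros r.
  pose proof large_scale_eps as Heps. pose proof large_scale_s_bounds as Hsb.
  pose proof sqrt2_bounds. pose proof inv_sqrt2_bounds as Hj.
  pose proof (Rle_abs ell). pose proof (Rle_abs (- ell)). rewrite Rabs_Ropp in *.
  set (eps := 40 * (A + 1) / T) in *. set (p := 1 - exp (- eps)).
  set (j := 1 / sqrt 2) in *. set (q := (1 - j) * p).
  destruct (exp_neg_taylor_bounds eps ltac:(lra)) as [_ Hp]. fold p in Hp.
  assert (Hq : 0.23416 * eps <= q <= 0.12) by (unfold q; split; nra).
  assert (Hskp : T ^ 3 / 2 * (0.23416 * eps) <= s * q) by (apply Rmult_le_compat; nra).
  assert (HepsT : eps * T = 40 * (A + 1)) by (unfold eps; field; lra).
  assert (Heps3 : T ^ 3 * eps = 40 * (A + 1) * T ^ 2) by (rewrite <- HepsT; ring).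
  assert (Hell3 : (ell - 2) * (2 + sqrt 2) >= - (Rabs ell + 2) * 3.42) by nra.
  assert (Hlin : 2 * s * (2 + sqrt 2) >= (T ^ 3 * (1 + j) + ell - 2) * (2 + sqrt 2))
    by (apply Rmult_ge_compat_r; lra).
  assert (HT2 : 1 <= T ^ 2) by nra.
  assert (Hsaddle : (1 + j) * (2 + sqrt 2) = 3 + 2 * sqrt 2).
  { unfold j. field_simplify_eq; [|lra]. rewrite sqrt2_sq. ring. }
  assert (Hr : 0.24 <= r).
  { assert (1 + r = sqrt 2 * (1 - q)) by (unfold r; rewrite one_add_saddle_radius; reflexivity).
    assert (sqrt 2 * q <= 1.4143 * 0.12) by (apply Rmult_le_compat; lra). lra. }
  pose proof (inv_sq_one_add_saddle_radius_ge eps ltac:(lra)) as HD1.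
  cbv zeta in HD1. fold p j q r in HD1.
  pose proof (inv_sq_one_sub_saddle_radius_le eps ltac:(lra)) as HD2. fold r in HD2.
  assert (HD : T ^ 2 <= s / (1 + r) ^ 2 - (T ^ 3 - s) / (1 - r) ^ 2).
  { unfold Rdiv at 1 2.
    assert (s * ((1 + 2 * q) / 2) <= s * / (1 + r) ^ 2) by (apply Rmult_le_compat_l; lra).
    assert ((T ^ 3 - s) * / (1 - r) ^ 2 <= (T ^ 3 - s) * ((3 + 2 * sqrt 2) / 2))
      by (apply Rmult_le_compat_l; lra).
    assert (s * ((1 + 2 * q) / 2) - (T ^ 3 - s) * ((3 + 2 * sqrt 2) / 2)
            = (2 * s * (2 + sqrt 2) - T ^ 3 * (3 + 2 * sqrt 2)) / 2 + s * q) by field.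
    assert ((T ^ 3 * (1 + j) + ell - 2) * (2 + sqrt 2)
            = T ^ 3 * (3 + 2 * sqrt 2) + (ell - 2) * (2 + sqrt 2))
      by (rewrite <- Hsaddle; ring).
    lra. }
  assert (0.24 * T ^ 2 <= r * (s / (1 + r) ^ 2 - (T ^ 3 - s) / (1 - r) ^ 2))
    by (apply Rmult_le_compat; lra).
  lra.
Qed.

Lemma saddle_log_large :
  let eps := 40 * (A + 1) / T in
  let r := saddle_radius eps in
  (T ^ 3 - s) * ln (1 - r) + s * ln (1 + r) - T ^ 3 * ln 2 / 2
    + (lam + eps) * (s - T ^ 3 / sqrt 2) - lam * ell
  <= A * (40 * (A + 1)) ^ 2 + (40 * (A + 1)) ^ 3.
Proof.
  intros eps r.
  pose proof large_scale_eps as Heps. pose proof large_scale_s_bounds as Hsb.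
  pose proof sqrt2_bounds. pose proof inv_sqrt2_bounds as Hj.
  pose proof lam_pos.
  fold eps in Heps.
  set (p := 1 - exp (- eps)).
  set (j := 1 / sqrt 2) in *.
  assert (Hj2 : j * j = 1 / 2) by (unfold j; field_simplify; [rewrite sqrt2_sq; reflexivity|lra]).
  destruct (exp_neg_taylor_bounds eps ltac:(lra)) as [Hp _]. fold p in Hp.
  pose proof (ln_one_sub_saddle_radius_le eps ltac:(lra)) as Hl1. cbv zeta in Hl1. fold p r in Hl1.
  replace (p / sqrt 2) with (j * p) in Hl1 by (unfold j; field; lra).
  pose proof (ln_one_add_saddle_radius_le eps ltac:(lra)) as Hl2. cbv zeta in Hl2. fold p j r in Hl2.
  assert (B1 : (T ^ 3 - s) * ln (1 - r)
               <= (T ^ 3 - s) * (ln 2 / 2 - lam + (j * p - (j * p) ^ 2 / 2 + (j * p) ^ 3 / 3)))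
    by (apply Rmult_le_compat_l; lra).
  assert (B2 : s * ln (1 + r) <= s * (ln 2 / 2 + (- ((1 - j) * p) - ((1 - j) * p) ^ 2 / 2)))
    by (apply Rmult_le_compat_l; lra).
  assert (B3 : lam * (2 * s - T ^ 3 * (1 + j) - ell) <= 0) by (apply Rmult_le_0_l; lra).
  pose proof (saddle_log_taylor (T ^ 3) s j eps p ell Hj2 ltac:(lra) Heps Hp ltac:(lra) ltac:(lra)) as B4.
  assert (HepsT : eps * T = 40 * (A + 1)) by (unfold eps; field; lra).
  assert (B5 : eps ^ 2 / 2 * ell * j <= A * (40 * (A + 1)) ^ 2).
  { rewrite <- HepsT. pose proof (Rle_abs ell).
    assert (ell * j <= Rabs ell * j) by (apply Rmult_le_compat_r; lra).
    assert (Rabs ell * j <= Rabs ell) by (pose proof (Rabs_pos ell); nra).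
    assert (0 <= eps ^ 2 / 2) by nra. assert (0 <= A * T ^ 2) by nra.
    replace (A * (eps * T) ^ 2) with (2 * (eps ^ 2 / 2) * (A * T ^ 2)) by field.
    replace (eps ^ 2 / 2 * ell * j) with (eps ^ 2 / 2 * (ell * j)) by ring.
    nra. }
  assert (B6 : T ^ 3 * eps ^ 3 = (40 * (A + 1)) ^ 3) by (rewrite <- HepsT; ring).
  replace (T ^ 3 / sqrt 2) with (T ^ 3 * j) by (unfold j; field; lra).
  lra.
Qed.

Lemma binom_conv_large (a b M : nat) : INR b = s -> INR a = T ^ 3 - s ->
  let eps := 40 * (A + 1) / T in
  let r := saddle_radius eps in
  Rabs (binom_conv (INR a) (INR b) M)
  <= exp (INR a * ln (1 - r) + INR b * ln (1 + r)) * (24 / T) * exp (INR M * (lam + eps)).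
Proof.
  intros Hb Ha eps r.
  pose proof large_scale_eps as Heps. fold eps in Heps.
  pose proof lam_pos.
  assert (Hr : 0 < r < 1).
  { split; [apply exp_pos|]. rewrite <- exp_0. apply exp_increasing. lra. }
  pose proof saddle_curvature_large as HK. cbv zeta in HK. fold eps r in HK.
  rewrite <- Ha, <- Hb in HK.
  pose proof (binom_conv_saddle_bound a b M r (T / 3) Hr ltac:(lra) HK) as Hbound.
  assert (HrM : r ^ M = exp (- (INR M * (lam + eps)))).
  { unfold r, saddle_radius. rewrite exp_pow. f_equal. ring. }
  assert (HF : (1 - r) ^ a * (1 + r) ^ b = exp (INR a * ln (1 - r) + INR b * ln (1 + r))).
  { rewrite exp_plus, <- !exp_pow, !exp_ln by lra. reflexivity. }
  rewrite HrM, HF, exp_Ropp in Hbound.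
  apply Rmult_le_reg_r with (/ exp (INR M * (lam + eps))).
  { apply Rinv_0_lt_compat, exp_pos. }
  replace (exp (INR a * ln (1 - r) + INR b * ln (1 + r)) * (24 / T) * exp (INR M * (lam + eps))
           * / exp (INR M * (lam + eps)))
    with (exp (INR a * ln (1 - r) + INR b * ln (1 + r)) * (8 / (T / 3)))
    by (field; split; [apply Rgt_not_eq, exp_pos|lra]).
  exact Hbound.
Qed.

Lemma saddle_exponent_large (kappa x xi : R) (u i : R) :
  0 < kappa -> T ^ 3 / sqrt 2 + kappa * xi * T - 1 < u -> kappa * x * T - 1 < i ->
  let eps := 40 * (A + 1) / T in
  let r := saddle_radius eps in
  - T ^ 3 / 2 * ln 2 + (i + kappa * xi * T - ell) * lam
    + ((T ^ 3 - s) * ln (1 - r) + s * ln (1 + r)) + (s - u - i) * (lam + eps)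
  <= lam + 1 + A * (40 * (A + 1)) ^ 2 + (40 * (A + 1)) ^ 3
     - 40 * (A + 1) * kappa * (x + xi).
Proof.
  intros Hk Hu Hi eps r.
  pose proof large_scale_eps as Heps. fold eps in Heps.
  pose proof lam_pos.
  pose proof saddle_log_large as Hlog. cbv zeta in Hlog. fold eps r in Hlog.
  assert (HepsT : eps * T = 40 * (A + 1)) by (unfold eps; field; lra).
  assert (Hu' : lam * (T ^ 3 / sqrt 2 + kappa * xi * T - u) <= lam * 1)
    by (apply Rmult_le_compat_l; lra).
  assert (Hui : eps * (T ^ 3 / sqrt 2 - u - i) <= eps * (2 - kappa * T * (x + xi)))
    by (apply Rmult_le_compat_l; lra).
  assert (eps * (kappa * T * (x + xi)) = 40 * (A + 1) * kappa * (x + xi))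
    by (rewrite <- HepsT; ring).
  lra.
Qed.
Lemma Q_shape_large (kappa x xi u i : R) (a b M : nat) :
  0 < kappa <= 1 -> T ^ 3 / sqrt 2 + kappa * xi * T - 1 < u -> kappa * x * T - 1 < i ->
  INR a = T ^ 3 - s -> INR b = s -> INR M = s - u - i ->
  Rabs (kappa * T * Rpower 2 (- T ^ 3 / 2) * Rpower (sqrt 2 + 1) (i + kappa * xi * T - ell)
        * binom_conv (INR a) (INR b) M)
  <= 24 * exp (lam + 1 + A * (40 * (A + 1)) ^ 2 + (40 * (A + 1)) ^ 3)
     * exp (- (40 * (A + 1) * kappa) * (x + xi)).
Proof.
  intros Hk Hu Hi Ha Hb HM.
  pose proof (binom_conv_large a b M Hb Ha) as Hbc.
  pose proof (saddle_exponent_large kappa x xi u i (proj1 Hk) Hu Hi) as Hexp.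
  cbv zeta in Hbc, Hexp.
  set (eps := 40 * (A + 1) / T) in *. set (r := saddle_radius eps) in *.
  unfold Rpower. fold lam. rewrite <- HM, <- Ha, <- Hb in Hexp.
  set (E := - T ^ 3 / 2 * ln 2 + (i + kappa * xi * T - ell) * lam
            + (INR a * ln (1 - r) + INR b * ln (1 + r)) + INR M * (lam + eps)) in Hexp.
  assert (Hpos : 0 <= kappa * T * exp (- T ^ 3 / 2 * ln 2) * exp ((i + kappa * xi * T - ell) * lam)).
  { pose proof (exp_pos (- T ^ 3 / 2 * ln 2)). pose proof (exp_pos ((i + kappa * xi * T - ell) * lam)).
    apply Rmult_le_pos; [apply Rmult_le_pos|]; nra. }
  rewrite Rabs_mult, (Rabs_pos_eq _ Hpos).
  apply Rle_trans with (24 * kappa * exp E).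
  - eapply Rle_trans; [apply Rmult_le_compat_l; [exact Hpos|exact Hbc]|].
    right. unfold E. rewrite !exp_plus. field. lra.
  - pose proof (exp_pos E).
    apply Rle_trans with (24 * exp E); [nra|].
    rewrite Rmult_assoc, <- exp_plus. apply Rmult_le_compat_l; [lra|]. apply exp_le_exp. lra.
Qed.

End LargeScale.

Lemma floorZ_spec (x : R) : IZR (floorZ x) <= x < IZR (floorZ x) + 1.
Proof. unfold floorZ. rewrite minus_IZR. destruct (archimed x). lra. Qed.

Lemma Rpower_2_nonpos (y : R) : y <= 0 -> 0 < Rpower 2 y <= 1.
Proof.
  intros Hy. split; [apply exp_pos|]. rewrite <- exp_0. apply exp_le_exp.
  pose proof ln_lt_2. nra.
Qed.

Lemma cube_root_n_spec (n : nat) : (1 <= n)%nat ->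
  0 < cube_root_n n /\ cube_root_n n ^ 3 = INR n /\ Rpower (INR n) (2 / 3) = cube_root_n n ^ 2.
Proof.
  intros Hn. assert (Hpos : 0 < INR n) by (apply lt_0_INR; lia).
  unfold cube_root_n. split; [apply exp_pos|].
  rewrite <- !Rpower_pow, !Rpower_mult by apply exp_pos.
  split; [|f_equal; simpl; field].
  replace (1 / 3 * INR 3) with 1 by (simpl; field). apply Rpower_1, Hpos.
Qed.

Lemma cube_root_n_ge (n : nat) (T0 : R) : 0 < T0 -> T0 ^ 3 <= INR n -> T0 <= cube_root_n n.
Proof.
  intros HT0 Hn.
  assert (HT03 : 0 < T0 ^ 3) by (apply pow_lt, HT0).
  replace T0 with (Rpower (T0 ^ 3) (1 / 3)).
  - apply Rle_Rpower_l; lra.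
  - rewrite <- Rpower_pow, Rpower_mult by exact HT0.
    replace (INR 3 * (1 / 3)) with 1 by (simpl; field). apply Rpower_1, HT0.
Qed.

Lemma INR_Z_to_nat (z : Z) : (0 <= z)%Z -> INR (Z.to_nat z) = IZR z.
Proof. intros Hz. rewrite INR_IZR_INZ, Z2Nat.id by exact Hz. reflexivity. Qed.

Lemma Q_n_bound (L x xi : R) (n : nat) : (1 <= n)%nat ->
  100 * (Rabs L + 1) <= cube_root_n n ->
  Rabs (Q_n n L x xi)
  <= 24 * exp (lam + 1 + Rabs L * (40 * (Rabs L + 1)) ^ 2 + (40 * (Rabs L + 1)) ^ 3)
     * exp (- (40 * (Rabs L + 1) * Rpower 2 (-5 / 6)) * (x + xi)).
Proof.
  intros Hn1 HT.
  destruct (cube_root_n_spec n Hn1) as [HT0 [HT3 HT2]].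
  pose proof (Rabs_pos L) as HL.
  pose proof (Rpower_2_nonpos (-5 / 6) ltac:(lra)) as Hk.
  pose proof (Rpower_2_nonpos (-1 / 6) ltac:(lra)) as Hk'.
  unfold Q_n, i_idx, u_idx. rewrite HT2.
  set (T := cube_root_n n) in *. set (kappa := Rpower 2 (-5 / 6)) in *.
  set (ell := Rpower 2 (-1 / 6) * L * T ^ 2).
  assert (Hell : Rabs ell <= Rabs L * T ^ 2).
  { unfold ell. rewrite !Rabs_mult, (Rabs_pos_eq (Rpower 2 _)), (Rabs_pos_eq (T ^ 2)) by (try apply pow_le; lra).
    assert (0 <= Rabs L * T ^ 2) by (apply Rmult_le_pos; [lra|apply pow_le; lra]). nra. }
  set (s := floorZ (b_n n L / 2)). set (i := floorZ (kappa * x * T)).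
  set (u := floorZ (INR n / sqrt 2 + kappa * xi * T)).
  pose proof (floorZ_spec (b_n n L / 2)) as Hs. fold s in Hs.
  pose proof (floorZ_spec (kappa * x * T)) as Hi. fold i in Hi.
  pose proof (floorZ_spec (INR n / sqrt 2 + kappa * xi * T)) as Hu. fold u in Hu.
  assert (Hb : b_n n L = T ^ 3 * (1 + 1 / sqrt 2) + ell) by (unfold b_n; rewrite HT2, HT3; reflexivity).
  rewrite Hb in Hs. rewrite <- HT3 in Hu |- *.
  assert (Hs2 : T ^ 3 * (1 + 1 / sqrt 2) + ell - 2 <= 2 * IZR s <= T ^ 3 * (1 + 1 / sqrt 2) + ell) by lra.
  pose proof (large_scale_s_bounds (Rabs L) T HL HT (IZR s) ell Hell Hs2) as Hsb.
  destruct (Z_lt_le_dec (s - (u + i)) 0) as [Hneg|Hpos].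
  - rewrite q_coef_neg, Rmult_0_r, Rabs_R0 by exact Hneg.
    apply Rmult_le_pos; [|apply Rlt_le, exp_pos].
    pose proof (exp_pos (lam + 1 + Rabs L * (40 * (Rabs L + 1)) ^ 2 + (40 * (Rabs L + 1)) ^ 3)). lra.
  - assert (Hsn : (s <= Z.of_nat n)%Z) by (apply le_IZR; rewrite <- INR_IZR_INZ; lra).
    assert (Hs0 : (0 <= s)%Z) by (apply le_IZR; nra).
    rewrite q_coef_binom_conv, <- HT3 by exact Hpos.
    rewrite <- (INR_Z_to_nat s) by exact Hs0.
    replace (T ^ 3 - INR (Z.to_nat s)) with (INR (Z.to_nat (Z.of_nat n - s)))
      by (rewrite !INR_Z_to_nat, minus_IZR, <- INR_IZR_INZ by lia; lra).
    apply (Q_shape_large (Rabs L) T HL HT (IZR s) ell Hell Hs2 kappa x xi (IZR u) (IZR i));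
      rewrite ?INR_Z_to_nat, ?minus_IZR, ?plus_IZR, <- ?INR_IZR_INZ by lia; lra.
Qed.

Theorem proposition5p4 (L : R) :
  exists c C : R, 0 < c /\
    exists N : nat, forall n : nat, (N <= n)%nat ->
      forall x xi : R, 0 <= x ->
        Rabs (Q_n n L x xi) <= C * exp (- c * (x + xi)).
Proof.
  pose proof (Rabs_pos L).
  pose proof (Rpower_2_nonpos (-5 / 6) ltac:(lra)).
  set (T0 := 100 * (Rabs L + 1)).
  exists (40 * (Rabs L + 1) * Rpower 2 (-5 / 6)),
    (24 * exp (lam + 1 + Rabs L * (40 * (Rabs L + 1)) ^ 2 + (40 * (Rabs L + 1)) ^ 3)).
  split; [apply Rmult_lt_0_compat; lra|].
  destruct (INR_unbounded (T0 ^ 3)) as [N HN].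
  exists N. intros n Hn x xi _.
  assert (HT0 : 0 < T0 ^ 3) by (apply pow_lt; unfold T0; lra).
  assert (Hn' : T0 ^ 3 <= INR n) by (apply le_INR in Hn; lra).
  apply Q_n_bound.
  - destruct n; [simpl in Hn'; lra|lia].
  - apply cube_root_n_ge; [unfold T0; lra|exact Hn'].
Qed.
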